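(* Let $\sigma_1,\sigma_2$ be convex polytopes in a Euclidean vector space $\mathbb{E}$, let $\sigma$ be the convex hull of some of the vertices of $\sigma_1\times\sigma_2\subseteq\mathbb{E}\times\mathbb{E}$, and let $\pi\colon\mathbb{E}\times\mathbb{E}\to\mathbb{E}$, $\pi(x,y)=x-y$. If $D_1$ is sufficiently rich for $\sigma_1$ and $D_2$ is sufficiently rich for $\sigma_2$, then $(D_1+D_2)\cup D_1\cup D_2$ is sufficiently rich for $\pi(\sigma)$; in particular it is sufficiently rich for $\sigma_1-\sigma_2$.
   Context: A finite set $D$ is sufficiently rich for a polytope $\tau$ if $w-v\in D$ for any two distinct vertices $v,w$ of $\tau$. $D_1+D_2$ and $\sigma_1-\sigma_2$ denote Minkowski sum and difference. *)

From HB Require Import structures.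
From mathcomp Require Import all_boot all_order all_algebra.
Set Implicit Arguments. Unset Strict Implicit. Unset Printing Implicit Defensive.
Import Order.TTheory GRing.Theory Num.Theory.
Local Open Scope ring_scope.

Section Defs.
Variable R : realFieldType.
Variable V : lmodType R.

Definition conv_hull (A : V -> Prop) : V -> Prop := fun x =>
  exists (m : nat) (p : 'I_m -> V) (l : 'I_m -> R),
    (forall i, A (p i)) /\ (forall i, 0 <= l i) /\
    \sum_(i < m) l i = 1 /\ x = \sum_(i < m) l i *: p i.

Definition is_polytope (P : V -> Prop) : Prop :=
  exists s : seq V, forall x, P x <-> conv_hull (fun y => y \in s) x.

Definition is_vertex (P : V -> Prop) (v : V) : Prop :=
  P v /\ forall x y (t : R), P x -> P y -> 0 < t -> t < 1 ->
    v = (1 - t) *: x + t *: y -> x = v /\ y = v.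

Definition suff_rich (D : seq V) (tau : V -> Prop) : Prop :=
  forall v w, is_vertex tau v -> is_vertex tau w -> v <> w -> w - v \in D.

Definition mink_diff (A B : V -> Prop) : V -> Prop :=
  fun x => exists a b, A a /\ B b /\ x = a - b.
End Defs.

Definition rich_union (R : realFieldType) (V : lmodType R) (D1 D2 : seq V) : seq V :=
  [seq a + b | a <- D1, b <- D2] ++ D1 ++ D2.

Definition setX_pred (T1 T2 : Type) (A : T1 -> Prop) (B : T2 -> Prop) : T1 * T2 -> Prop :=
  fun z => A z.1 /\ B z.2.

Definition pi_img (R : realFieldType) (V : lmodType R) (S : V * V -> Prop) : V -> Prop :=
  fun x => exists z, S z /\ x = z.1 - z.2.

(* A vertex of a convex set cannot be a proper convex combination of points of
   that set, so a vertex of a convex hull conv(A) already lies in A.  Since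
   pi is linear, pi(conv W) = conv(pi W), so every vertex of pi(sigma) is
   w1 - w2 for a vertex (w1, w2) of sigma1 x sigma2, and the coordinates of
   a vertex of a product are vertices of the factors.  Likewise every vertex
   of sigma1 - sigma2 is a - b with a, b vertices of sigma1, sigma2.  Finally
   the difference of (b1 - b2) and (a1 - a2) is (b1 - a1) + (a2 - b2), which
   lies in D1 + D2, or in D2 when a1 = b1, or in D1 when a2 = b2. *)
From HB Require Import structures.
From mathcomp Require Import all_boot all_order all_algebra.
Set Implicit Arguments. Unset Strict Implicit.
Import Order.TTheory GRing.Theory Num.Theory.
Local Open Scope ring_scope.

Section Vertices.
Variables (R : realFieldType) (V : lmodType R).

Lemma conv_hull_mem (A : V -> Prop) x : A x -> conv_hull A x.
Proof.
move=> Ax; exists 1%N, (fun=> x), (fun=> 1).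
by rewrite !big_ord1 scale1r.
Qed.

Lemma convex_comb_id (t : R) (b : V) : (1 - t) *: b + t *: b = b.
Proof. by rewrite -scalerDl subrK scale1r. Qed.

Lemma vertex_conv_comb (P A : V -> Prop) v :
  (forall x, conv_hull A x -> P x) -> is_vertex P v ->
  forall m (p : 'I_m -> V) (l : 'I_m -> R),
  (forall i, A (p i)) -> (forall i, 0 <= l i) -> \sum_(i < m) l i = 1 ->
  v = \sum_(i < m) l i *: p i -> exists i, p i = v.
Proof.
move=> convP [_ extv]; elim=> [|m IH] p l Ap l_ge0.
  by rewrite big_ord0 => /eqP; rewrite eq_sym oner_eq0.
rewrite !big_ord_recl; set t := l ord0 => l_sum1 ev.
have tail_ge0 : 0 <= \sum_(i < m) l (lift ord0 i) by apply: sumr_ge0.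
have [t0|t_neq0] := eqVneq t 0.
  have tail_sum1 : \sum_(i < m) l (lift ord0 i) = 1 by rewrite -l_sum1 t0 add0r.
  have ev_tail : v = \sum_(i < m) l (lift ord0 i) *: p (lift ord0 i).
    by rewrite ev t0 scale0r add0r.
  have [i <-] := IH (p \o lift ord0) (l \o lift ord0) (fun=> Ap _) (fun=> l_ge0 _)
    tail_sum1 ev_tail.
  by exists (lift ord0 i).
have [t1|t_neq1] := eqVneq t 1.
  have tail0 : \sum_(i < m) l (lift ord0 i) = 0.
    by apply: (@addrI _ 1); rewrite addr0 -{2}l_sum1 t1.
  exists ord0; rewrite ev t1 scale1r big1 ?addr0 // => i _.
  by rewrite (psumr_eq0P (fun i _ => l_ge0 (lift ord0 i)) tail0) ?scale0r.
have tail_sum : \sum_(i < m) l (lift ord0 i) = 1 - t by rewrite -l_sum1 addrC addKr.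
have one_subt_neq0 : 1 - t != 0 by rewrite subr_eq0 eq_sym.
(* Renormalising the weights of the other points gives a point q of P with
   v = (1 - t) q + t p_0. *)
pose q := \sum_(i < m) (l (lift ord0 i) / (1 - t)) *: p (lift ord0 i).
have Pq : P q.
  apply/convP; exists m, (p \o lift ord0), (fun i => l (lift ord0 i) / (1 - t)).
  split=> [i|]; first exact: Ap.
  split=> [i|]; first by rewrite divr_ge0 // -tail_sum.
  by rewrite -mulr_suml tail_sum divff.
have ev' : v = (1 - t) *: q + t *: p ord0.
  rewrite ev addrC scaler_sumr; congr (_ + _); apply: eq_bigr => i _.
  by rewrite scalerA mulrC divfK.
have t_gt0 : 0 < t by rewrite lt_def t_neq0 l_ge0.
have t_lt1 : t < 1 by rewrite lt_def eq_sym t_neq1 -l_sum1 lerDl.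
have [_ p0v] := extv _ _ _ Pq (convP _ (conv_hull_mem (Ap ord0))) t_gt0 t_lt1 ev'.
by exists ord0.
Qed.

Lemma vertex_conv_hull_mem (P A : V -> Prop) v :
  (forall x, conv_hull A x -> P x) -> is_vertex P v -> conv_hull A v -> A v.
Proof.
move=> convP Pv [m [p [l [Ap [l_ge0 [l_sum1 ev]]]]]].
by have [i <-] := vertex_conv_comb convP Pv Ap l_ge0 l_sum1 ev.
Qed.

Lemma is_vertex_setX (s1 s2 : V -> Prop) (w : V * V) :
  is_vertex (setX_pred s1 s2) w -> is_vertex s1 w.1 /\ is_vertex s2 w.2.
Proof.
case: w => a1 a2 [[/= S1 S2] extw]; split; split=> // x y t Px Py t_gt0 t_lt1 e.
  have E : (a1, a2) = (1 - t) *: (x, a2) + t *: (y, a2).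
    by rewrite -[RHS]/((1 - t) *: x + t *: y, (1 - t) *: a2 + t *: a2) convex_comb_id -e.
  by have [[->] [->]] := extw (x, a2) (y, a2) t (conj Px S2) (conj Py S2) t_gt0 t_lt1 E.
have E : (a1, a2) = (1 - t) *: (a1, x) + t *: (a1, y).
  by rewrite -[RHS]/((1 - t) *: a1 + t *: a1, (1 - t) *: x + t *: y) convex_comb_id -e.
by have [[->] [->]] := extw (a1, x) (a1, y) t (conj S1 Px) (conj S1 Py) t_gt0 t_lt1 E.
Qed.

Lemma is_vertex_mink_diff (s1 s2 : V -> Prop) v :
  is_vertex (mink_diff s1 s2) v ->
  exists a b, [/\ is_vertex s1 a, is_vertex s2 b & v = a - b].
Proof.
move=> [[a [b [Sa [Sb ->]]]] extv]; exists a, b.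
split=> //; split=> // x y t Px Py t_gt0 t_lt1 e.
  have Dx : mink_diff s1 s2 (x - b) by exists x, b.
  have Dy : mink_diff s1 s2 (y - b) by exists y, b.
  have [] := extv _ _ _ Dx Dy t_gt0 t_lt1.
    by rewrite !scalerBr addrACA -opprD convex_comb_id e.
  by move=> /addIr -> /addIr ->.
have Dx : mink_diff s1 s2 (a - x) by exists a, x.
have Dy : mink_diff s1 s2 (a - y) by exists a, y.
have [] := extv _ _ _ Dx Dy t_gt0 t_lt1.
  by rewrite !scalerBr addrACA -opprD convex_comb_id e.
by move=> /addrI/oppr_inj -> /addrI/oppr_inj ->.
Qed.

Lemma pi_sum m (l : 'I_m -> R) (q : 'I_m -> V * V) :
  (\sum_(i < m) l i *: q i).1 - (\sum_(i < m) l i *: q i).2 =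
  \sum_(i < m) l i *: ((q i).1 - (q i).2).
Proof.
rewrite (big_morph fst (id1 := 0) (op1 := +%R)) //.
rewrite (big_morph snd (id1 := 0) (op1 := +%R)) //.
by rewrite -sumrB; apply: eq_bigr => i _; rewrite scalerBr.
Qed.

Lemma conv_hull_pi_img (S : V * V -> Prop) x :
  conv_hull (pi_img S) x <-> pi_img (conv_hull S) x.
Proof.
split.
  move=> [m [p [l [Sp [l_ge0 [l_sum1 ->]]]]]]; have [q Sq] := fin_all_exists Sp.
  exists (\sum_(i < m) l i *: q i); split.
    by exists m, q, l; split=> // i; case: (Sq i).
  by rewrite pi_sum; apply: eq_bigr => i _; case: (Sq i) => _ ->.
move=> [_ [[m [q [l [Sq [l_ge0 [l_sum1 ->]]]]]] ->]].
exists m, (fun i => (q i).1 - (q i).2), l; split; first by move=> i; exists (q i).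
by rewrite pi_sum.
Qed.

Lemma suff_rich_rich_union (s1 s2 tau : V -> Prop) (D1 D2 : seq V) :
  (forall v, is_vertex tau v ->
     exists a b, [/\ is_vertex s1 a, is_vertex s2 b & v = a - b]) ->
  suff_rich D1 s1 -> suff_rich D2 s2 -> suff_rich (rich_union D1 D2) tau.
Proof.
move=> tau_vertex rich1 rich2 v w /tau_vertex[a1 [a2 [Va1 Va2 ->]]].
move=> /tau_vertex[b1 [b2 [Vb1 Vb2 ->]]] neq; rewrite /rich_union !mem_cat.
have -> : b1 - b2 - (a1 - a2) = (b1 - a1) + (a2 - b2).
  by rewrite opprB addrACA [RHS]addrACA [- b2 + _]addrC.
have [e1|n1] := eqVneq a1 b1.
  rewrite e1 subrr add0r rich2 ?orbT // => e2.
  by apply: neq; rewrite e1 e2.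
have [e2|n2] := eqVneq a2 b2.
  by rewrite e2 subrr addr0 rich1 ?orbT //; exact/eqP.
by rewrite allpairs_f // ?rich1 ?rich2 //; apply/eqP; rewrite // eq_sym.
Qed.

End Vertices.

Theorem mainTheorem17 (R : realFieldType) (n : nat)
    (sigma1 sigma2 : 'rV[R]_n -> Prop) (sigma : 'rV[R]_n * 'rV[R]_n -> Prop)
    (D1 D2 : seq 'rV[R]_n) :
  is_polytope sigma1 -> is_polytope sigma2 ->
  (exists W : seq ('rV[R]_n * 'rV[R]_n),
      (forall w, w \in W -> is_vertex (setX_pred sigma1 sigma2) w) /\
      (forall z, sigma z <-> conv_hull (fun y => y \in W) z)) ->
  suff_rich D1 sigma1 -> suff_rich D2 sigma2 ->
  suff_rich (rich_union D1 D2) (pi_img sigma) /\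
  suff_rich (rich_union D1 D2) (mink_diff sigma1 sigma2).
Proof.
move=> _ _ [W [W_vertex sigmaE]] rich1 rich2.
split; apply: suff_rich_rich_union rich1 rich2; last exact: is_vertex_mink_diff.
have pi_sigmaE x : pi_img sigma x <-> conv_hull (pi_img (fun y => y \in W)) x.
  apply: iff_trans (iff_sym (conv_hull_pi_img _ _)).
  by split=> -[z [Sz ->]]; exists z; split=> //; apply/sigmaE.
move=> v Vv.
have [w [Ww ->]] :=
  vertex_conv_hull_mem (fun x => (pi_sigmaE x).2) Vv ((pi_sigmaE v).1 Vv.1).
by have [] := is_vertex_setX (W_vertex w Ww); exists w.1, w.2.
Qed.
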